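(* Let $\phi:\mathbf{R}^n\to\mathbf{R}$ be a uniformly convex norm of class $\mathcal{C}^2$ on $\mathbf{R}^n\setminus\{0\}$, $K\subseteq\mathbf{R}^n$ closed, $0<s<t<\infty$, $1<\lambda<\infty$, and $K_{\lambda,s,t}=\{x:\rho^\phi_K(x)\ge\lambda,\ s\le\delta^\phi_K(x)\le t\}$. Then there exists $\Gamma\in\mathbf{R}$ depending only on $s,t,\lambda,\phi$ such that $$\phi(\xi^\phi_K(a)-y)\le\Gamma\,\phi(a-b)$$ whenever $a\in K_{\lambda,s,t}$, $b\in\mathbf{R}^n$, $y\in\xi^\phi_K(b)$ and $\delta^\phi_K(b)\le t$. In particular $\xi^\phi_K|K_{\lambda,s,t}$ is Lipschitz continuous.
   Context: A norm $\phi$ on $\mathbf{R}^n$ is uniformly convex if there is $\gamma>0$ such that $x\mapsto\phi(x)-\gamma|x|$ is convex. For closed $K$: $\delta^\phi_K(x)=\inf\{\phi(y-x):y\in K\}$; $\xi^\phi_K(x)=K\cap\{w:\phi(x-w)=\delta^\phi_K(x)\}$ (on $K_{\lambda,s,t}$ this set is a singleton, identified with its element); $\rho^\phi_K(x)=\sup\bigl(\mathbf{R}\cap\{s':\delta^\phi_K(w+s'(x-w))=s'\delta^\phi_K(x)\}\bigr)$ for any $w\in\xi^\phi_K(x)$ (independent of the choice of $w$). *)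

From HB Require Import structures.
From mathcomp Require Import all_boot all_order all_algebra.
From mathcomp Require Import all_classical all_reals all_analysis.
Set Implicit Arguments. Unset Strict Implicit. Unset Printing Implicit Defensive.
Import Order.TTheory GRing.Theory Num.Theory.
Import numFieldNormedType.Exports.
Local Open Scope classical_set_scope.
Local Open Scope ring_scope.

Section Defs.
Variables (R : realType) (n : nat).
Notation V := 'rV[R]_n.

Definition eucl (x : V) : R := Num.sqrt (\sum_(i < n) x ord0 i ^+ 2).

Definition is_norm (phi : V -> R) : Prop :=
  [/\ forall x y, phi (x + y) <= phi x + phi y,
      forall (c : R) x, phi (c *: x) = `|c| * phi x
    & forall x, phi x = 0 -> x = 0].

Definition convex_fun (f : V -> R) : Prop :=
  forall x y (l : R), 0 <= l -> l <= 1 ->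
    f ((1 - l) *: x + l *: y) <= (1 - l) * f x + l * f y.

Definition uniformly_convex (phi : V -> R) : Prop :=
  exists gamma : R, 0 < gamma /\ convex_fun (fun x => phi x - gamma * eucl x).

Definition e_ (i : 'I_n) : V := \row_(j < n) (if j == i then 1 else 0).

Definition C2_off0 (phi : V -> R) : Prop :=
  (forall x : V, x != 0 -> forall i : 'I_n, derivable phi x (e_ i)) /\
  (forall x : V, x != 0 -> forall i j : 'I_n,
      derivable (fun y => 'D_(e_ i) phi y) x (e_ j)) /\
  (forall i : 'I_n,
      {within [set x : V | x != 0], continuous (fun y => 'D_(e_ i) phi y)}) /\
  (forall i j : 'I_n,
      {within [set x : V | x != 0],
        continuous (fun y => 'D_(e_ j) (fun z => 'D_(e_ i) phi z) y)}).

Variable phi : V -> R.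

Definition delta (K : set V) (x : V) : R := inf [set phi (y - x) | y in K].

Definition xi (K : set V) (x : V) : set V :=
  K `&` [set w | phi (x - w) = delta K x].

(* rho computed with an arbitrary (chosen) element w of xi K x *)
Definition rho (K : set V) (x : V) : \bar R :=
  let w := xget 0 (xi K x) in
  ereal_sup [set (s'%:E) | s' in
    [set s' : R | delta K (w + s' *: (x - w)) = s' * delta K x]].

Definition Klst (K : set V) (l s t : R) : set V :=
  [set x | (l%:E <= rho K x)%E /\ s <= delta K x /\ delta K x <= t].

End Defs.

(* Let w be the nearest point of a, y one of b, and put u = w - a, e = a - b,
   p = y - w.  As rho a > lam > 1, the point w + r (a - w) is at distance
   r delta a from K for some r > lam, so phi u <= phi (u + r^-1 p); and since
   y is nearest to b, phi (u + e + p) <= phi (u + e).  Uniform convexity turns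
   the first inequality into phi p ^ 2 <~ F + F ^ 2 with
   F = phi (u + p) - phi u >= 0.  The second one says that F is at most minus
   the mixed second difference of phi at u in the directions e and p, which is
   O(phi e phi p) because the second derivatives of phi are bounded on the
   compact annulus s / 2 <= phi <= t + 1.  Hence phi p <~ phi e for small
   phi e; for large phi e the triangle inequality phi p <= 2 t + phi e
   suffices. *)

From HB Require Import structures.
From mathcomp Require Import all_boot all_order all_algebra.
From mathcomp Require Import all_classical all_reals all_analysis.
From mathcomp Require Import ring lra.
Import Order.TTheory GRing.Theory Num.Theory.
Import numFieldNormedType.Exports.
Local Open Scope classical_set_scope.
Local Open Scope ring_scope.
Set Implicit Arguments. Unset Strict Implicit. Unset Printing Implicit Defensive.

Lemma sqr_le_of_abs (R : realDomainType) (x y : R) : `|x| <= y -> x ^+ 2 <= y ^+ 2.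
Proof.
move=> xy; rewrite -real_normK ?num_real // ler_sqr ?nnegrE //.
exact: le_trans (normr_ge0 x) xy.
Qed.

Lemma le_of_sqr_le_affine (R : realFieldType) (P a q : R) :
  0 <= P -> 0 <= a -> q <= 2^-1 -> P ^+ 2 <= a * P + q * P ^+ 2 -> P <= 2 * a.
Proof.
move=> P_ge0 a_ge0 q_le PaP; have [->|P_neq0] := eqVneq P 0; first by rewrite mulr_ge0.
have P_gt0 : 0 < P by rewrite lt_def P_neq0.
by rewrite -(ler_pM2r P_gt0); nra.
Qed.

Section Norm.
Variables (R : realType) (n : nat) (phi : 'rV[R]_n -> R).
Hypothesis phi_norm : is_norm phi.

Lemma phiD x y : phi (x + y) <= phi x + phi y.
Proof. by case: phi_norm. Qed.

Lemma phiZ c x : phi (c *: x) = `|c| * phi x.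
Proof. by case: phi_norm. Qed.

Lemma phi_eq0 x : phi x = 0 -> x = 0.
Proof. by case: phi_norm => _ _; apply. Qed.

Lemma phi0 : phi 0 = 0.
Proof. by rewrite -(scale0r 0) phiZ normr0 mul0r. Qed.

Lemma phiN x : phi (- x) = phi x.
Proof. by rewrite -scaleN1r phiZ normrN normr1 mul1r. Qed.

Lemma phi_distC x y : phi (x - y) = phi (y - x).
Proof. by rewrite -phiN opprB. Qed.

Lemma phi_ge0 x : 0 <= phi x.
Proof. by have := phiD x (- x); rewrite subrr phi0 phiN; lra. Qed.

Lemma phi_lerB_dist x y : phi x - phi y <= phi (x - y).
Proof. by have := phiD (x - y) y; rewrite subrK; lra. Qed.

Lemma phi_ler_dist_dist x y : `|phi x - phi y| <= phi (x - y).
Proof. by rewrite ler_norml phi_lerB_dist lerNl opprB phi_distC phi_lerB_dist. Qed.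

Lemma ler_phi_sum (I : Type) (r : seq I) (F : I -> 'rV[R]_n) :
  phi (\sum_(i <- r) F i) <= \sum_(i <- r) phi (F i).
Proof.
elim/big_ind2: _ => [|x1 x2 y1 y2 h1 h2|//]; first by rewrite phi0.
by apply: le_trans (phiD _ _) _; apply: lerD.
Qed.

Lemma phi_convex x y (mu : R) : 0 <= mu <= 1 ->
  phi ((1 - mu) *: x + mu *: y) <= (1 - mu) * phi x + mu * phi y.
Proof.
case/andP=> mu0 mu1; apply: le_trans (phiD _ _) _.
by rewrite !phiZ !ger0_norm // subr_ge0.
Qed.

Lemma phi_ray_le x p (mu : R) : 0 < mu <= 1 ->
  phi x <= phi (x + mu *: p) -> phi x <= phi (x + p).
Proof.
case/andP=> mu_gt0 mu_le1 x_le.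
have : phi (x + mu *: p) <= (1 - mu) * phi x + mu * phi (x + p).
  rewrite -[x + mu *: p](_ : (1 - mu) *: x + mu *: (x + p) = _).
    by apply: phi_convex; rewrite ltW.
  by rewrite scalerDr addrA -scalerDl subrK scale1r.
by nra.
Qed.

End Norm.

Section Euclid.
Variables (R : realType) (n : nat).
Implicit Types (x y : 'rV[R]_n) (c : R).

Definition dot x y : R := \sum_(i < n) x ord0 i * y ord0 i.

Lemma dotC x y : dot x y = dot y x.
Proof. by apply: eq_bigr => i _; rewrite mulrC. Qed.

Lemma dotDl x y z : dot (x + y) z = dot x z + dot y z.
Proof. by rewrite /dot -big_split; apply: eq_bigr => i _; rewrite !mxE mulrDl. Qed.

Lemma dotZl c x y : dot (c *: x) y = c * dot x y.
Proof. by rewrite /dot mulr_sumr; apply: eq_bigr => i _; rewrite !mxE mulrA. Qed.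

Lemma dotDr x y z : dot x (y + z) = dot x y + dot x z.
Proof. by rewrite dotC dotDl !(dotC x). Qed.

Lemma dotZr c x y : dot x (c *: y) = c * dot x y.
Proof. by rewrite dotC dotZl dotC. Qed.

Lemma eucl_sq x : eucl x ^+ 2 = dot x x.
Proof.
rewrite sqr_sqrtr; last by apply: sumr_ge0 => i _; apply: sqr_ge0.
by apply: eq_bigr => i _; rewrite expr2.
Qed.

Lemma eucl_ge0 x : 0 <= eucl x.
Proof. exact: sqrtr_ge0. Qed.

Lemma eucl_sq_lincomb a b x y :
  eucl (a *: x + b *: y) ^+ 2 =
  a ^+ 2 * eucl x ^+ 2 + 2 * a * b * dot x y + b ^+ 2 * eucl y ^+ 2.
Proof.
by rewrite !eucl_sq !(dotDl, dotDr, dotZl, dotZr) (dotC y x); ring.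
Qed.

Lemma eucl_sub_sq x y :
  eucl (x - y) ^+ 2 = (eucl x - eucl y) ^+ 2 + 2 * (eucl x * eucl y - dot x y).
Proof. by have := eucl_sq_lincomb 1 (-1) x y; rewrite scale1r scaleN1r => ->; ring. Qed.

Lemma eucl_sub_radial_sq x y : eucl y != 0 ->
  eucl (x - (eucl x / eucl y) *: y) ^+ 2
    = 2 * (eucl x / eucl y) * (eucl y * eucl x - dot y x).
Proof.
move=> y0; have := eucl_sq_lincomb 1 (- (eucl x / eucl y)) x y.
by rewrite scale1r scaleNr => ->; rewrite (dotC y x); field.
Qed.

Lemma euclZ c x : eucl (c *: x) = `|c| * eucl x.
Proof.
rewrite -[LHS]ger0_norm ?eucl_ge0 // -sqrtr_sqr eucl_sq dotZl dotZr mulrA -expr2.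
by rewrite sqrtrM ?sqr_ge0 // sqrtr_sqr -eucl_sq sqrtr_sqr (ger0_norm (eucl_ge0 x)).
Qed.

Lemma eucl_eq0 x : eucl x = 0 -> x = 0.
Proof.
move=> /(congr1 (fun r => r ^+ 2)); rewrite expr0n /= eucl_sq => /eqP.
rewrite psumr_eq0; last by move=> i _; rewrite -expr2 sqr_ge0.
move/allP=> xi0.
apply/rowP => j; rewrite mxE.
by move: (xi0 j (mem_index_enum _)); rewrite /= mulf_eq0 orbb => /eqP.
Qed.

Lemma dot_le_eucl x y : dot x y <= eucl x * eucl y.
Proof.
have dot0l z : dot 0 z = 0 by rewrite -(scale0r (0 : 'rV_n)) dotZl mul0r.
have [/eucl_eq0 ->|x0] := eqVneq (eucl x) 0.
  by rewrite dot0l mulr_ge0 ?eucl_ge0.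
have [/eucl_eq0 ->|y0] := eqVneq (eucl y) 0.
  by rewrite dotC dot0l mulr_ge0 ?eucl_ge0.
have xy0 : 0 < eucl x * eucl y by rewrite mulr_gt0 // lt_def ?x0 ?y0 eucl_ge0.
have := sqr_ge0 (eucl (eucl y *: x + (- eucl x) *: y)).
rewrite eucl_sq_lincomb => h.
have : 0 <= (eucl x * eucl y) * (eucl x * eucl y - dot x y) by nra.
by rewrite pmulr_rge0 // subr_ge0.
Qed.

Lemma coord_le_eucl x i : `|x ord0 i| <= eucl x.
Proof.
rewrite -(@ler_pXn2r _ 2) ?nnegrE ?eucl_ge0 // eucl_sq real_normK ?num_real //.
rewrite /dot (bigD1 i) //= -expr2 lerDl.
by apply: sumr_ge0 => j _; rewrite -expr2 sqr_ge0.
Qed.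

Lemma sum_abs_coord_le x : \sum_(i < n) `|x ord0 i| <= n%:R * eucl x.
Proof.
rewrite -[n in n%:R]card_ord -sumr_const mulr_suml.
by apply: ler_sum => i _; rewrite mul1r coord_le_eucl.
Qed.

Lemma norm_le_eucl x : `|x| <= eucl x.
Proof.
rewrite [`|x|]mx_normrE; apply: bigmax_le => [|[i j] _]; first exact: eucl_ge0.
by rewrite (ord1 i) coord_le_eucl.
Qed.

Lemma row_basis_decomp x : x = \sum_(i < n) x ord0 i *: e_ R i.
Proof.
apply/rowP => j; rewrite summxE (bigD1 j) //= big1 => [|i /negbTE ij].
  by rewrite !mxE eqxx mulr1 addr0.
by rewrite !mxE eq_sym ij mulr0.
Qed.

End Euclid.

Section NormComparison.
Variables (R : realType) (n : nat) (phi : 'rV[R]_n -> R).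
Hypothesis phi_norm : is_norm phi.

Definition phi_basis_sum := \sum_(i < n) phi (e_ R i).

Lemma phi_basis_sum_ge0 : 0 <= phi_basis_sum.
Proof. by apply: sumr_ge0 => i _; exact: phi_ge0. Qed.

Lemma weighted_coord_sum_le (x : 'rV[R]_n) :
  \sum_(i < n) `|x ord0 i| * phi (e_ R i) <= phi_basis_sum * eucl x.
Proof.
rewrite /phi_basis_sum mulr_suml; apply: ler_sum => i _.
by rewrite mulrC ler_wpM2l ?(phi_ge0 phi_norm) ?coord_le_eucl.
Qed.

Lemma phi_le_coord (x : 'rV[R]_n) (M : R) :
  (forall i, `|x ord0 i| <= M) -> phi x <= phi_basis_sum * M.
Proof.
move=> xM; rewrite {1}(row_basis_decomp x); apply: le_trans (ler_phi_sum phi_norm _ _) _.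
rewrite /phi_basis_sum mulr_suml; apply: ler_sum => i _.
by rewrite (phiZ phi_norm) mulrC ler_wpM2l ?(phi_ge0 phi_norm).
Qed.

Lemma phi_le_eucl (x : 'rV[R]_n) : phi x <= phi_basis_sum * eucl x.
Proof. exact/phi_le_coord/coord_le_eucl. Qed.

Lemma continuous_phi : continuous phi.
Proof.
have C0 : 0 < phi_basis_sum + 1 by rewrite ltr_wpDl ?phi_basis_sum_ge0.
move=> x; apply/(@cvgrPdist_le _ _ _ _ (nbhs_filter x)) => e e0.
apply/nbhs_ballP; exists (e / (phi_basis_sum + 1)); first by rewrite /= divr_gt0.
move=> y; rewrite -ball_normE /= ltr_pdivlMr // => xy.
apply: le_trans (phi_ler_dist_dist phi_norm _ _) _.
have /phi_le_coord xyC : forall i, `|(x - y) ord0 i| <= `|x - y|.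
  by move=> i; rewrite [`|x - y|]mx_normrE (le_trans _ (le_bigmax _ _ (ord0, i))).
apply: le_trans xyC (le_trans _ (ltW xy)).
by rewrite mulrC ler_wpM2l ?normr_ge0 ?lerDl.
Qed.

End NormComparison.

Section UniformConvexity.
Variables (R : realType) (n : nat) (phi : 'rV[R]_n -> R) (gamma : R).
Hypotheses (phi_norm : is_norm phi) (gamma_gt0 : 0 < gamma).
Hypothesis phi_uconvex : convex_fun (fun x => phi x - gamma * eucl x).

Lemma eucl_le_phi (x : 'rV[R]_n) : gamma * eucl x <= phi x.
Proof.
have := phi_uconvex x (- x) (l := 2^-1); rewrite invr_ge0 invf_le1 ?ler1n //.
have -> : (1 - 2^-1) *: x + 2^-1 *: - x = 0.
  by rewrite scalerN -scalerBl (_ : 1 - 2^-1 - 2^-1 = 0) ?scale0r //; field.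
have eN : eucl (- x) = eucl x by rewrite -scaleN1r euclZ normrN normr1 mul1r.
rewrite (phi0 phi_norm) (phiN phi_norm) eN -(scale0r (0 : 'rV_n)) euclZ normr0.
by move=> /(_ (ler0n _ 2) isT); lra.
Qed.

Lemma compact_phi_annulus (a b : R) : compact [set x | a <= phi x <= b].
Proof.
apply: bounded_closed_compact.
  exists (b / gamma); split=> [|M bM x /andP[_ xb]]; first exact: num_real.
  apply: le_trans (norm_le_eucl x) (le_trans _ (ltW bM)).
  by rewrite ler_pdivlMr // mulrC (le_trans (eucl_le_phi x)).
have -> : [set x | a <= phi x <= b] = phi @^-1` `[a, b].
  by apply/seteqP; split => x /=; rewrite in_itv.
by apply: preimage_closed; [move=> x _; apply: continuous_phi | apply: interval_closed].
Qed.

Local Notation d2 i j := (fun y => 'D_(e_ R j) (fun z => 'D_(e_ R i) phi z) y).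

Lemma C2_hessian_bounded (a b : R) : C2_off0 phi -> 0 < a ->
  exists2 M : R, 0 <= M & forall i j x, a <= phi x <= b -> `|d2 i j x| <= M.
Proof.
move=> [_ [_ [_ d2_cont]]] a_gt0.
set S := [set x | a <= phi x <= b].
have bounded_ij (ij : 'I_n * 'I_n) : exists2 M : R, 0 <= M &
    forall x, S x -> `|d2 ij.1 ij.2 x| <= M.
  have cont : {within S, continuous (d2 ij.1 ij.2)}.
    apply: (continuous_subspaceW _ (d2_cont ij.1 ij.2)) => x /andP[ax _].
    by apply/eqP => x0; move: ax; rewrite x0 (phi0 phi_norm) leNgt a_gt0.
  have /compact_bounded [M0 [_ hM]] := continuous_compact cont (@compact_phi_annulus a b).
  exists (`|M0| + 1); first by rewrite addr_ge0.
  by move=> x Sx; apply: (hM (`|M0| + 1)); [rewrite ltr_pwDr ?ler_norm | exists x].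
have [M M_ge0 hM] := fin_all_exists2 bounded_ij.
exists (\sum_ij M ij) => [|i j x Sx]; first exact: sumr_ge0.
apply: le_trans (hM (i, j) x Sx) _.
by rewrite (bigD1 (i, j)) //= lerDl sumr_ge0.
Qed.

End UniformConvexity.

Section LineDerivative.
Variable R : realType.

Lemma is_derive_line (V : normedModType R) (f : V -> R) (z v : V) (s : R) :
  derivable f (s *: v + z) v ->
  is_derive s 1 (fun t : R => f (t *: v + z)) ('D_v f (s *: v + z)).
Proof.
have quotE : (fun h : R => h^-1 *: (((fun t : R => f (t *: v + z)) \o shift s) (h *: 1)
            - f (s *: v + z)))
       = (fun h : R => h^-1 *: ((f \o shift (s *: v + z)) (h *: v) - f (s *: v + z))).
  by apply: funext => h /=; rewrite [h%:A]mulr1 scalerDl addrA.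
move=> fd; have fd1 : derivable (fun t : R => f (t *: v + z)) s 1 by rewrite /derivable quotE.
by have := derivableP fd1; rewrite /derive quotE.
Qed.

Lemma MVT_abs_le (g dg : R -> R) (c M : R) :
  (forall x : R, `|x| <= `|c| -> is_derive x 1 g (dg x)) ->
  (forall x : R, `|x| <= `|c| -> `|dg x| <= M) ->
  `|g c - g 0| <= M * `|c|.
Proof.
move=> gd gM.
have seg a b : a <= b -> (forall x, x \in `[a, b] -> `|x| <= `|c|) ->
    `|g b - g a| <= M * (b - a).
  move=> ab abc; have gd' x (x_ab : x \in `]a, b[) := gd x (abc x (subset_itv_oo_cc x_ab)).
  have gc : {within `[a, b], continuous g}.
    by apply: derivable_within_continuous => x /abc/gd/@ex_derive.
  have [x /abc xc ->] := MVT_segment ab gd' gc.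
  by rewrite normrM [`|b - a|]ger0_norm ?subr_ge0 // ler_wpM2r ?subr_ge0 ?gM.
have [c0|c0] := leP 0 c.
  rewrite (ger0_norm c0) -[X in M * X]subr0; apply: seg => // x.
  by rewrite in_itv /= => /andP[x0 xc]; rewrite !ger0_norm.
rewrite distrC (ltr0_norm c0) -[X in M * X]sub0r; apply: seg => [|x]; first exact: ltW.
by rewrite in_itv /= => /andP[cx x0]; rewrite ler0_norm // ltr0_norm // lerN2.
Qed.

End LineDerivative.

Section MixedDifference.
Variables (R : realType) (n : nat) (phi : 'rV[R]_n -> R).
Hypothesis phi_norm : is_norm phi.
Implicit Types (z e p : 'rV[R]_n).

Definition mixed_diff z e p := phi (z + e + p) - phi (z + e) - phi (z + p) + phi z.

Lemma mixed_diffDr z e p1 p2 :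
  mixed_diff z e (p1 + p2) = mixed_diff z e p1 + mixed_diff (z + p1) e p2.
Proof.
by rewrite /mixed_diff !addrA (addrAC z p1 e) (addrAC (z + e) p1 p2); ring.
Qed.

Lemma mixed_diffDl z e1 e2 p :
  mixed_diff z (e1 + e2) p = mixed_diff z e1 p + mixed_diff (z + e1) e2 p.
Proof. by rewrite /mixed_diff !addrA; ring. Qed.

Lemma mixed_diff0r z e : mixed_diff z e 0 = 0.
Proof. by rewrite /mixed_diff !addr0; ring. Qed.

Lemma mixed_diff0l z p : mixed_diff z 0 p = 0.
Proof. by rewrite /mixed_diff !addr0; ring. Qed.

Lemma mixed_diff_le z e p : `|mixed_diff z e p| <= 2 * phi e.
Proof.
rewrite /mixed_diff (addrAC z e p).
have := phi_ler_dist_dist phi_norm (z + p + e) (z + p).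
have := phi_ler_dist_dist phi_norm (z + e) z.
rewrite [_ - (z + p)]addrC addKr [_ - z]addrC addKr !ler_norml.
by move=> /andP[h1 h2] /andP[h3 h4]; apply/andP; split; lra.
Qed.

End MixedDifference.

Section MixedDifferenceBound.
Variables (R : realType) (n : nat) (phi : 'rV[R]_n -> R).
Hypotheses (phi_norm : is_norm phi) (phi_C2 : C2_off0 phi).
Variables (S : set 'rV[R]_n) (M : R).
Hypothesis S_neq0 : forall x, S x -> x != 0.
Hypothesis hessian_le :
  forall i j x, S x -> `|'D_(e_ R j) (fun z => 'D_(e_ R i) phi z) x| <= M.

Lemma mixed_diff_rect z i j (a b : R) :
  (forall s t, `|s| <= `|a| -> `|t| <= `|b| -> S (s *: e_ R i + (t *: e_ R j + z))) ->
  `|mixed_diff phi z (a *: e_ R i) (b *: e_ R j)| <= M * `|a| * `|b|.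
Proof.
move=> rectS; case: phi_C2 => d1_ex [d2_ex _].
have S0 s : `|s| <= `|a| -> S (s *: e_ R i + z).
  by move=> sa; have := rectS s 0 sa; rewrite normr0 normr_ge0 scale0r add0r; apply.
pose k s := phi (s *: e_ R i + (b *: e_ R j + z)) - phi (s *: e_ R i + z).
have -> : mixed_diff phi z (a *: e_ R i) (b *: e_ R j) = k a - k 0.
  rewrite /mixed_diff.
  have -> : z + a *: e_ R i + b *: e_ R j = a *: e_ R i + (b *: e_ R j + z).
    by rewrite addrAC addrC [z + _]addrC.
  by rewrite /k !scale0r !add0r !(addrC z); ring.
rewrite -mulrA [`|a| * _]mulrC mulrA; apply: MVT_abs_le => s sa.
  apply: is_deriveB; apply: is_derive_line; apply/d1_ex/S_neq0; last exact: S0.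
  exact: rectS.
pose g t := 'D_(e_ R i) phi (t *: e_ R j + (s *: e_ R i + z)).
have S_st t : `|t| <= `|b| -> S (t *: e_ R j + (s *: e_ R i + z)).
  by move=> tb; rewrite addrCA; apply: rectS.
rewrite /= (_ : _ - _ = g b - g 0); last by rewrite /g scale0r add0r addrCA.
apply: (@MVT_abs_le _ g
  (fun t => 'D_(e_ R j) ('D_(e_ R i) phi) (t *: e_ R j + (s *: e_ R i + z)))) => t tb.
  exact/is_derive_line/d2_ex/S_neq0/S_st.
exact/hessian_le/S_st.
Qed.

Variables (z0 : 'rV[R]_n) (rad : R).
Hypothesis ball_sub : forall x, phi (x - z0) <= rad -> S x.

Lemma phi_sub_shift z (c : R) j :
  phi (z + c *: e_ R j - z0) <= phi (z - z0) + `|c| * phi (e_ R j).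
Proof. by rewrite addrAC -(phiZ phi_norm); apply: phiD. Qed.

Lemma mixed_diff_rect_ball z i j (a b : R) :
  phi (z - z0) + `|a| * phi (e_ R i) + `|b| * phi (e_ R j) <= rad ->
  `|mixed_diff phi z (a *: e_ R i) (b *: e_ R j)| <= M * `|a| * `|b|.
Proof.
move=> zab; apply: mixed_diff_rect => s t sa tb; apply: ball_sub.
rewrite [s *: _ + _]addrC [t *: _ + z]addrC.
apply: le_trans (phi_sub_shift _ _ _) _.
apply: le_trans (lerD (phi_sub_shift _ _ _) (lexx _)) _; apply: le_trans zab.
have := phi_ge0 phi_norm (e_ R i); have := phi_ge0 phi_norm (e_ R j).
by rewrite -addrA; nra.
Qed.

Lemma weighted_sum_ge0 (r : seq 'I_n) (c : 'I_n -> R) :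
  0 <= \sum_(j <- r) `|c j| * phi (e_ R j).
Proof. by apply: sumr_ge0 => j _; rewrite mulr_ge0 ?(phi_ge0 phi_norm). Qed.

Lemma mixed_diff_sumr_le z i (a : R) (r : seq 'I_n) (c : 'I_n -> R) :
  phi (z - z0) + `|a| * phi (e_ R i) + \sum_(j <- r) `|c j| * phi (e_ R j) <= rad ->
  `|mixed_diff phi z (a *: e_ R i) (\sum_(j <- r) c j *: e_ R j)|
    <= M * `|a| * \sum_(j <- r) `|c j|.
Proof.
elim: r z => [|j r IH] z; first by rewrite !big_nil mixed_diff0r normr0 mulr0.
rewrite !big_cons mixed_diffDr mulrDr => zr; have W0 := weighted_sum_ge0 r c.
apply: le_trans (ler_normD _ _) (lerD _ _).
  by apply: mixed_diff_rect_ball; lra.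
by apply: IH; have := phi_sub_shift z (c j) j; lra.
Qed.

Lemma mixed_diff_sum_le z (r r' : seq 'I_n) (d c : 'I_n -> R) :
  phi (z - z0) + \sum_(i <- r) `|d i| * phi (e_ R i)
    + \sum_(j <- r') `|c j| * phi (e_ R j) <= rad ->
  `|mixed_diff phi z (\sum_(i <- r) d i *: e_ R i) (\sum_(j <- r') c j *: e_ R j)|
    <= M * (\sum_(i <- r) `|d i|) * \sum_(j <- r') `|c j|.
Proof.
elim: r z => [|i r IH] z; first by rewrite !big_nil mixed_diff0l normr0 mulr0 mul0r.
rewrite !big_cons mixed_diffDl mulrDr mulrDl => zr.
have W0 := weighted_sum_ge0 r d; have W'0 := weighted_sum_ge0 r' c.
apply: le_trans (ler_normD _ _) (lerD _ _).
  by apply: mixed_diff_sumr_le; lra.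
by apply: IH; have := phi_sub_shift z (d i) i; lra.
Qed.

Hypothesis M_ge0 : 0 <= M.

Lemma mixed_diff_le_eucl e p :
  phi_basis_sum phi * (eucl e + eucl p) <= rad ->
  `|mixed_diff phi z0 e p| <= M * (n%:R * eucl e) * (n%:R * eucl p).
Proof.
move=> epr; rewrite {1}(row_basis_decomp e) {1}(row_basis_decomp p).
apply: le_trans (mixed_diff_sum_le _) _.
  rewrite subrr (phi0 phi_norm) add0r; apply: le_trans epr.
  by rewrite mulrDr; apply: lerD; apply: weighted_coord_sum_le.
rewrite -mulrA -[X in _ <= X]mulrA ler_wpM2l //.
apply: ler_pM; rewrite ?sumr_ge0 ?sum_abs_coord_le //.
Qed.

End MixedDifferenceBound.

Section LocalSecondOrderBound.
Variables (R : realType) (n : nat) (phi : 'rV[R]_n -> R) (gamma : R).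
Hypotheses (phi_norm : is_norm phi) (phi_C2 : C2_off0 phi) (gamma_gt0 : 0 < gamma).
Hypothesis phi_uconvex : convex_fun (fun x => phi x - gamma * eucl x).
Variables (s t : R).
Hypothesis s_gt0 : 0 < s.

Lemma ball_in_annulus (u x : 'rV[R]_n) : s <= phi u <= t ->
  phi (x - u) <= Num.min (s / 2) 1 -> s / 2 <= phi x <= t + 1.
Proof.
rewrite le_min => /andP[su ut] /andP[xu_s xu_1].
have := phiD phi_norm (x - u) u; rewrite subrK.
have := phi_lerB_dist phi_norm u x; rewrite phi_distC //.
by move=> *; apply/andP; split; lra.
Qed.

Lemma mixed_diff_small : exists eta M1 : R, [/\ 0 < eta, 0 <= M1 &
  forall u e p, s <= phi u <= t -> phi e <= eta -> phi p <= eta ->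
    `|mixed_diff phi u e p| <= M1 * phi e * phi p].
Proof.
have [M M_ge0 hessM] := C2_hessian_bounded phi_norm gamma_gt0 phi_uconvex (t + 1) phi_C2
  (divr_gt0 s_gt0 (ltr0Sn _ 1)).
set rad := Num.min (s / 2) 1; set C := phi_basis_sum phi + 1.
have rad_gt0 : 0 < rad by rewrite lt_min divr_gt0 ?ltr01.
have C_gt0 : 0 < C by rewrite ltr_wpDl ?phi_basis_sum_ge0.
exists (rad * gamma / (2 * C)), (M * n%:R ^+ 2 / gamma ^+ 2).
split=> [||u e p ust e_eta p_eta]; first by rewrite divr_gt0 ?mulr_gt0.
  by rewrite divr_ge0 ?mulr_ge0 ?exprn_ge0 // ltW.
have eucl_le x : phi x <= rad * gamma / (2 * C) -> eucl x <= rad / (2 * C).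
  move=> /(le_trans (eucl_le_phi phi_norm phi_uconvex x)).
  by rewrite [rad * _ / _]mulrAC [_ * gamma]mulrC ler_pM2l.
have S_neq0 x : s / 2 <= phi x <= t + 1 -> x != 0.
  by case/andP=> sx _; apply/eqP => x0; move: sx; rewrite x0 (phi0 phi_norm) leNgt divr_gt0.
have ball x : phi (x - u) <= rad -> s / 2 <= phi x <= t + 1 by apply: ball_in_annulus.
apply: le_trans (mixed_diff_le_eucl phi_norm phi_C2 S_neq0 hessM ball M_ge0 _) _.
  have /eucl_le ee := e_eta; have /eucl_le ep := p_eta.
  have Cb : phi_basis_sum phi <= C by rewrite lerDl.
  apply: le_trans (_ : C * (2 * (rad / (2 * C))) <= _).
    by apply: ler_pM; rewrite ?phi_basis_sum_ge0 ?addr_ge0 ?eucl_ge0 // mulr2n mulrDl mul1r lerD.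
  by rewrite (_ : C * _ = rad) //; field; rewrite gt_eqF.
have eucl_le_div x : eucl x <= phi x / gamma.
  by rewrite ler_pdivlMr // mulrC eucl_le_phi.
rewrite (_ : _ * phi e * phi p = M * (n%:R * (phi e / gamma)) * (n%:R * (phi p / gamma))).
  apply: ler_pM; rewrite ?mulr_ge0 ?ler0n ?eucl_ge0 //.
    by rewrite ler_wpM2l // ler_wpM2l ?ler0n.
  by rewrite ler_wpM2l ?ler0n.
by field; rewrite gt_eqF.
Qed.

Lemma mixed_diff_local_bound : exists eta M2 : R, [/\ 0 < eta, 0 <= M2 &
  forall u e p, s <= phi u <= t -> phi e <= eta ->
    `|mixed_diff phi u e p| <= M2 * phi e * phi p].
Proof.
have [eta [M1 [eta_gt0 M1_ge0 small]]] := mixed_diff_small.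
have c_ge0 : 0 <= 2 / eta by rewrite divr_ge0 ?ltW.
exists eta, (M1 + 2 / eta); split=> [//||u e p ust e_eta]; first exact: addr_ge0.
have [e_ge0 p_ge0] := (phi_ge0 phi_norm e, phi_ge0 phi_norm p).
have [p_eta|eta_p] := leP (phi p) eta.
  apply: le_trans (small u e p ust e_eta p_eta) _.
  by rewrite !ler_wpM2r // lerDl.
apply: le_trans (mixed_diff_le phi_norm u e p) _.
have -> : (M1 + 2 / eta) * phi e * phi p
    = M1 * phi e * phi p + 2 * phi e * (phi p / eta) by ring.
rewrite -[X in X <= _]addr0 addrC lerD ?mulr_ge0 //.
by rewrite ler_peMr ?mulr_ge0 // ler_pdivlMr // mul1r ltW.
Qed.

End LocalSecondOrderBound.

Section UniformConvexityEstimates.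
Variables (R : realType) (n : nat) (phi : 'rV[R]_n -> R) (gamma : R).
Hypotheses (phi_norm : is_norm phi) (gamma_gt0 : 0 < gamma).
Hypothesis phi_uconvex : convex_fun (fun x => phi x - gamma * eucl x).
Implicit Types (A B : 'rV[R]_n).

Lemma uconvex_angle_defect A B (mu : R) : 0 < mu < 1 ->
  phi A <= phi ((1 - mu) *: A + mu *: B) ->
  2 * gamma ^+ 2 * (1 - mu) * (eucl A * eucl B - dot A B)
    <= (phi B - phi A) * (phi A + phi B + phi ((1 - mu) *: A + mu *: B)).
Proof.
move=> /andP[mu_gt0 mu_lt1]; set C := _ + _ => AC.
have := phi_uconvex A B (ltW mu_gt0) (ltW mu_lt1); rewrite -/C /= => cv.
have cn : phi C <= (1 - mu) * phi A + mu * phi B.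
  by apply: phi_convex => //; rewrite !ltW.
have := eucl_sq_lincomb (1 - mu) mu A B; rewrite -/C => sq.
have := dot_le_eucl A B; have := eucl_le_phi phi_norm phi_uconvex A.
have := eucl_le_phi phi_norm phi_uconvex B; have := eucl_le_phi phi_norm phi_uconvex C.
have := eucl_ge0 A; have := eucl_ge0 B; have := eucl_ge0 C.
move: cv cn sq AC; rewrite -/C.
move: (eucl A) (eucl B) (eucl C) (dot A B) (phi A) (phi B) (phi C) => a b c k pa pb pc.
move=> cv cn sq AC c0 b0 a0 gc gb ga ab.
(* D is the defect of the Euclidean triangle inequality c <= (1 - mu) a + mu b. *)
set D := (1 - mu) * a + mu * b - c; set den := (1 - mu) * a + mu * b + c.
have gD : gamma * D <= mu * (pb - pa) by rewrite /D; lra.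
have Dden : D * den = 2 * mu * (1 - mu) * (a * b - k).
  have -> : D * den = ((1 - mu) * a + mu * b) ^+ 2 - c ^+ 2 by rewrite /D /den; ring.
  by rewrite sq; ring.
have den_ge0 : 0 <= den by rewrite /den; nra.
have den_le : den <= a + b + c by rewrite /den; nra.
have gden : gamma * den <= pa + pb + pc.
  by apply: le_trans (ler_wpM2l (ltW gamma_gt0) den_le) _; rewrite !mulrDr; lra.
have pab : 0 <= pb - pa by nra.
have h1 : gamma * (gamma * (2 * mu * (1 - mu) * (a * b - k)))
    <= gamma * (mu * (pb - pa) * den).
  by rewrite ler_pM2l // -Dden mulrA ler_wpM2r.
have h2 : mu * (pb - pa) * (gamma * den) <= mu * (pb - pa) * (pa + pb + pc).
  by rewrite ler_wpM2l // mulr_ge0 // ltW.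
by rewrite -(ler_pM2l mu_gt0); nra.
Qed.

Variable C : R.
Hypothesis phi_le_C : forall x, phi x <= C * eucl x.

Lemma eucl_sub_sq_le A B : 0 < eucl A ->
  gamma ^+ 2 * eucl (B - A) ^+ 2 <= 2 * (phi B - phi A) ^+ 2
    + (4 * C ^+ 2 * (eucl B / eucl A) + 2 * gamma ^+ 2) * (eucl A * eucl B - dot A B).
Proof.
move=> A_gt0; set kap := eucl B / eucl A; set X := _ - dot A B.
have kap_ge0 : 0 <= kap by rewrite divr_ge0 ?eucl_ge0 ?ltW.
have proj := eucl_sub_radial_sq B (lt0r_neq0 A_gt0); rewrite -/kap -/X in proj.
have radial : (phi B - kap * phi A) ^+ 2 <= C ^+ 2 * (2 * kap * X).
  rewrite -proj -exprMn; apply: sqr_le_of_abs.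
  have -> : kap * phi A = phi (kap *: A) by rewrite (phiZ phi_norm) ger0_norm.
  exact: le_trans (phi_ler_dist_dist phi_norm _ _) (phi_le_C _).
have radial_gap : gamma ^+ 2 * (eucl B - eucl A) ^+ 2 <= (kap * phi A - phi A) ^+ 2.
  have -> : kap * phi A - phi A = (phi A / eucl A) * (eucl B - eucl A).
    by rewrite /kap; field; rewrite gt_eqF.
  rewrite [in X in _ <= X]exprMn ler_wpM2r ?sqr_ge0 // sqr_le_of_abs //.
  by rewrite (ger0_norm (ltW gamma_gt0)) ler_pdivlMr // eucl_le_phi.
have gap : (kap * phi A - phi A) ^+ 2
    <= 2 * (phi B - kap * phi A) ^+ 2 + 2 * (phi B - phi A) ^+ 2.
  by have := sqr_ge0 (phi B - kap * phi A + (phi B - phi A)); nra.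
by rewrite eucl_sub_sq dotC (mulrC (eucl B)) -/X; lra.
Qed.

End UniformConvexityEstimates.

Section RadialGap.
Variables (R : realType) (n : nat) (phi : 'rV[R]_n -> R) (gamma C : R).
Hypotheses (phi_norm : is_norm phi) (gamma_gt0 : 0 < gamma) (C_gt0 : 0 < C).
Hypothesis phi_uconvex : convex_fun (fun x => phi x - gamma * eucl x).
Hypothesis phi_le_C : forall x, phi x <= C * eucl x.
Variables (s t lam : R).
Hypotheses (s_gt0 : 0 < s) (s_le_t : s <= t) (lam_gt1 : 1 < lam).

Let t_gt0 : 0 < t := lt_le_trans s_gt0 s_le_t.

Let lamV_lt1 : lam^-1 < 1.
Proof. by rewrite invf_lt1 ?(lt_trans ltr01). Qed.

Lemma eucl_gt0_of_phi x : s <= phi x -> 0 < eucl x.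
Proof.
by move=> sx; rewrite -(pmulr_rgt0 _ C_gt0) (lt_le_trans s_gt0 (le_trans sx (phi_le_C x))).
Qed.

Lemma eucl_ratio_le x y : s <= phi x -> phi y <= 3 * t + 1 ->
  eucl y / eucl x <= (3 * t + 1) * C / (gamma * s).
Proof.
move=> sx y_le; have x_gt0 := eucl_gt0_of_phi sx.
have gs_gt0 : 0 < gamma * s by rewrite mulr_gt0.
rewrite ler_pdivrMr // mulrAC ler_pdivlMr //.
rewrite mulrA [eucl y * gamma]mulrC -[_ * C * _]mulrA.
apply: ler_pM; rewrite ?mulr_ge0 ?eucl_ge0 ?(ltW s_gt0) ?(ltW gamma_gt0) //.
  exact: le_trans (eucl_le_phi phi_norm phi_uconvex y) y_le.
exact: le_trans sx (phi_le_C x).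
Qed.

Lemma angle_defect_le_gap u p (mu : R) :
  phi u <= t -> phi p <= 2 * t + 1 -> 0 < mu <= lam^-1 ->
  phi u <= phi (u + mu *: p) ->
  2 * gamma ^+ 2 * (1 - lam^-1) * (eucl u * eucl (u + p) - dot u (u + p))
    <= (phi (u + p) - phi u) * (7 * t + 2).
Proof.
move=> u_t p_le /andP[mu_gt0 mu_lam] u_mu.
have mu_lt1 : mu < 1 := le_lt_trans mu_lam lamV_lt1.
have F_ge0 : 0 <= phi (u + p) - phi u.
  by rewrite subr_ge0 (phi_ray_le phi_norm _ u_mu) // mu_gt0 ltW.
have pu_ge0 := phi_ge0 phi_norm u; have pp_ge0 := phi_ge0 phi_norm p.
have pB : phi (u + p) <= 3 * t + 1 by have := phiD phi_norm u p; lra.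
have pC : phi (u + mu *: p) <= 3 * t + 1.
  have := phiD phi_norm u (mu *: p); rewrite (phiZ phi_norm) gtr0_norm //; nra.
have segE : (1 - mu) *: u + mu *: (u + p) = u + mu *: p.
  by rewrite scalerDr addrA -scalerDl subrK scale1r.
have := uconvex_angle_defect phi_norm gamma_gt0 phi_uconvex (A := u) (B := u + p).
move=> /(_ mu); rewrite segE mu_gt0 mu_lt1 => /(_ isT u_mu) angle.
apply: le_trans (le_trans _ angle) _.
  have g2 : 0 <= 2 * gamma ^+ 2 by rewrite mulr_ge0 ?sqr_ge0.
  by rewrite ler_wpM2r ?subr_ge0 ?dot_le_eucl // ler_wpM2l // lerD2l lerN2.
by rewrite ler_wpM2l //; lra.
Qed.

Lemma phi_sqr_le_gap : exists2 c : R, 0 <= c & forall u p (mu : R),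
  s <= phi u <= t -> phi p <= 2 * t + 1 -> 0 < mu <= lam^-1 ->
  phi u <= phi (u + mu *: p) ->
  phi p ^+ 2 <= c * ((phi (u + p) - phi u) + (phi (u + p) - phi u) ^+ 2).
Proof.
have m0_gt0 : 0 < 1 - lam^-1 by rewrite subr_gt0.
set K := (3 * t + 1) * C / (gamma * s).
have K_ge0 : 0 <= K.
  by rewrite /K divr_ge0 ?mulr_ge0 ?addr_ge0 ?mulr_ge0 ?ltW.
set Q := (4 * C ^+ 2 * K + 2 * gamma ^+ 2) * (7 * t + 2) / (2 * gamma ^+ 2 * (1 - lam^-1)).
have Q_ge0 : 0 <= Q.
  have C2 := sqr_ge0 C; have g2 := sqr_ge0 gamma; have t_ge0 := ltW t_gt0.
  by apply: divr_ge0; first apply: mulr_ge0; nra.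
exists (C ^+ 2 / gamma ^+ 2 * (Q + 2)).
  by rewrite mulr_ge0 ?divr_ge0 ?sqr_ge0 ?addr_ge0.
move=> u p mu /andP[s_u u_t] p_le mu_itv u_mu.
have angle := angle_defect_le_gap u_t p_le mu_itv u_mu.
set F := phi (u + p) - phi u in angle *; set X := _ - dot u (u + p) in angle.
have F_ge0 : 0 <= F.
  case/andP: mu_itv => mu_gt0 mu_lam.
  by rewrite subr_ge0 (phi_ray_le phi_norm _ u_mu) // mu_gt0 (le_trans mu_lam) ?ltW.
have := eucl_sub_sq_le phi_norm gamma_gt0 phi_uconvex phi_le_C (u + p) (eucl_gt0_of_phi s_u).
rewrite addrAC subrr add0r -/F -/X => disp.
have dispQ : gamma ^+ 2 * eucl p ^+ 2 <= 2 * F ^+ 2 + Q * F.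
  apply: le_trans disp _; rewrite lerD2l.
  apply: le_trans (_ : (4 * C ^+ 2 * K + 2 * gamma ^+ 2) * X <= _).
    rewrite ler_wpM2r ?subr_ge0 ?dot_le_eucl // lerD2r.
    apply: ler_wpM2l; first by rewrite mulr_ge0 ?sqr_ge0.
    by apply: eucl_ratio_le => //; have := phiD phi_norm u p; lra.
  have -> : Q * F = (4 * C ^+ 2 * K + 2 * gamma ^+ 2)
      * (F * (7 * t + 2) / (2 * gamma ^+ 2 * (1 - lam^-1))) by rewrite /Q; ring.
  apply: ler_wpM2l; first by have := sqr_ge0 C; have := sqr_ge0 gamma; nra.
  rewrite ler_pdivlMr; last by rewrite !mulr_gt0 ?exprn_gt0.
  by rewrite mulrC.
have P2 : phi p ^+ 2 <= C ^+ 2 * eucl p ^+ 2.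
  by rewrite -exprMn sqr_le_of_abs // ger0_norm ?(phi_ge0 phi_norm).
rewrite -(ler_pM2l (exprn_gt0 2 gamma_gt0)).
have -> : gamma ^+ 2 * (C ^+ 2 / gamma ^+ 2 * (Q + 2) * (F + F ^+ 2))
    = C ^+ 2 * ((Q + 2) * (F + F ^+ 2)) by field; rewrite gt_eqF.
apply: le_trans (ler_wpM2l (sqr_ge0 gamma) P2) _.
rewrite mulrCA ler_wpM2l ?sqr_ge0 //; apply: le_trans dispQ _.
by have := sqr_ge0 F; nra.
Qed.

End RadialGap.

Section LocalLipschitzEstimate.
Variables (R : realType) (n : nat) (phi : 'rV[R]_n -> R) (gamma : R).
Hypotheses (phi_norm : is_norm phi) (phi_C2 : C2_off0 phi) (gamma_gt0 : 0 < gamma).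
Hypothesis phi_uconvex : convex_fun (fun x => phi x - gamma * eucl x).
Variables (s t lam : R).
Hypotheses (s_gt0 : 0 < s) (s_le_t : s <= t) (lam_gt1 : 1 < lam).

Lemma local_lipschitz_estimate : exists d0 G : R, [/\ 0 < d0, d0 <= 1 &
  forall u e p (mu : R), s <= phi u <= t -> phi e <= d0 -> phi p <= 2 * t + 1 ->
    0 < mu <= lam^-1 -> phi u <= phi (u + mu *: p) ->
    phi (u + e + p) <= phi (u + e) -> phi p <= G * phi e].
Proof.
have [eta [M [eta_gt0 M_ge0 mixedB]]] :=
  mixed_diff_local_bound phi_norm phi_C2 gamma_gt0 phi_uconvex t s_gt0.
have C_gt0 : 0 < phi_basis_sum phi + 1 by rewrite ltr_wpDl ?phi_basis_sum_ge0.
have phi_le_C x : phi x <= (phi_basis_sum phi + 1) * eucl x.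
  by rewrite (le_trans (phi_le_eucl phi_norm x)) // ler_wpM2r ?eucl_ge0 ?lerDl.
have [c c_ge0 gapB] :=
  phi_sqr_le_gap phi_norm gamma_gt0 C_gt0 phi_uconvex phi_le_C s_gt0 s_le_t lam_gt1.
have cM_gt0 : 0 < 1 + 2 * c * M ^+ 2 by rewrite ltr_pwDl ?mulr_ge0 ?sqr_ge0.
set d0 := Num.min (Num.min eta 1) (1 + 2 * c * M ^+ 2)^-1.
exists d0, (2 * (c * M)); split=> [||u e p mu ust e_d0 p_le mu_itv u_mu e_p].
- by rewrite !lt_min eta_gt0 ltr01 invr_gt0.
- by rewrite !ge_min lexx orbT.
move: e_d0; rewrite !le_min => /andP[/andP[e_eta e_le1] e_c].
have [E_ge0 P_ge0] := (phi_ge0 phi_norm e, phi_ge0 phi_norm p).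
set F := phi (u + p) - phi u.
have F_ge0 : 0 <= F.
  case/andP: mu_itv => mu_gt0 mu_lam; rewrite subr_ge0 (phi_ray_le phi_norm _ u_mu) //.
  by rewrite mu_gt0 (le_trans mu_lam) // invf_le1 ?ltW ?(lt_trans ltr01).
have F_le : F <= M * phi e * phi p.
  by have := mixedB u e p ust e_eta; rewrite /F ler_norml /mixed_diff => /andP[+ _]; lra.
have F2_le : F ^+ 2 <= (M * phi e * phi p) ^+ 2 by rewrite sqr_le_of_abs ?ger0_norm.
have q_le : c * M ^+ 2 * phi e ^+ 2 <= 2^-1.
  move: e_c; rewrite -[X in _ <= X]div1r ler_pdivlMr // => e_c.
  rewrite -[2^-1]div1r ler_pdivlMr ?ltr0n //.
  by have := sqr_ge0 M; have := mulr_ge0 c_ge0 (sqr_ge0 M); nra.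
rewrite -mulrA; apply: (le_of_sqr_le_affine (q := c * M ^+ 2 * phi e ^+ 2)) => //.
  by rewrite !mulr_ge0.
have := ler_wpM2l c_ge0 F_le; have := ler_wpM2l c_ge0 F2_le.
move=> h2 h1; apply: le_trans (gapB u p mu ust p_le mu_itv u_mu) _; rewrite -/F; nra.
Qed.

End LocalLipschitzEstimate.

Section NearestPoints.
Variables (R : realType) (n : nat) (phi : 'rV[R]_n -> R).
Hypothesis phi_norm : is_norm phi.
Implicit Types (K : set 'rV[R]_n) (a b w x y : 'rV[R]_n).

Lemma delta_le K x y : K y -> delta phi K x <= phi (y - x).
Proof.
move=> Ky; apply: ge_inf; last by exists y.
by exists 0 => _ [y' _ <-]; apply: phi_ge0.
Qed.

Lemma rho_gt_witness K a (lam : R) :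
  (lam%:E < rho phi K a)%E -> exists2 r : R, lam < r &
    delta phi K (xget 0 (xi phi K a) + r *: (a - xget 0 (xi phi K a)))
      = r * delta phi K a.
Proof. by case/ereal_sup_gt => _ [r r_ray <-]; rewrite lte_fin; exists r. Qed.

Lemma nearest_point_ray K a w y (r : R) : xi phi K a w -> 0 < r ->
  delta phi K (w + r *: (a - w)) = r * delta phi K a -> K y ->
  phi (w - a) <= phi (w - a + r^-1 *: (y - w)).
Proof.
move=> [_ aw] r_gt0 ray Ky; have := delta_le (w + r *: (a - w)) Ky.
have -> : y - (w + r *: (a - w)) = r *: (w - a + r^-1 *: (y - w)).
  by apply/rowP => i; rewrite !mxE; field; rewrite gt_eqF.
rewrite ray (phiZ phi_norm) gtr0_norm // -aw phi_distC //.
by rewrite ler_pM2l.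
Qed.

End NearestPoints.

Section NearestPointLipschitz.
Variables (R : realType) (n : nat) (phi : 'rV[R]_n -> R) (gamma : R).
Hypotheses (phi_norm : is_norm phi) (phi_C2 : C2_off0 phi) (gamma_gt0 : 0 < gamma).
Hypothesis phi_uconvex : convex_fun (fun x => phi x - gamma * eucl x).
Variables (s t l : R).
Hypotheses (s_gt0 : 0 < s) (s_le_t : s <= t) (l_gt1 : 1 < l).

Lemma xget_xi_lipschitz : exists Gamma : R, forall K a b y,
  Klst phi K l s t a -> xi phi K a !=set0 -> delta phi K b <= t -> xi phi K b y ->
  phi (y - xget 0 (xi phi K a)) <= Gamma * phi (a - b).
Proof.
set lam := (1 + l) / 2; have lam_gt1 : 1 < lam by rewrite /lam; have := l_gt1; lra.
have [d0 [G [d0_gt0 d0_le1 gapB]]] :=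
  local_lipschitz_estimate phi_norm phi_C2 gamma_gt0 phi_uconvex s_gt0 s_le_t lam_gt1.
exists (Num.max G (2 * t / d0 + 1)) => K a b y [rho_a [s_a a_t]] xi_a b_t [Ky yb].
have [Kw wa] := xgetPex 0 xi_a; set w := xget 0 (xi phi K a) in Kw wa *.
have lam_l : (lam%:E < l%:E)%E.
  by rewrite lte_fin /lam; have := l_gt1; lra.
have [r lam_r ray] := rho_gt_witness (lt_le_trans lam_l rho_a).
have r_gt0 : 0 < r by rewrite (lt_trans _ lam_r) // (lt_trans ltr01).
have := nearest_point_ray phi_norm (conj Kw wa) r_gt0 ray Ky.
set u := w - a; set e := a - b; set p := y - w => u_ray.
have u_st : s <= phi u <= t by rewrite /u phi_distC // wa s_a.
have u_stay : phi (u + e + p) <= phi (u + e).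
  have -> : u + e + p = - (b - y) by apply/rowP => i; rewrite !mxE; ring.
  have -> : u + e = w - b by apply/rowP => i; rewrite !mxE; ring.
  by rewrite (phiN phi_norm) yb delta_le.
have p_le : phi p <= 2 * t + phi e.
  have -> : p = - (b - y) + (- e + - u) by apply/rowP => i; rewrite !mxE; ring.
  apply: le_trans (phiD phi_norm _ _) _; rewrite !(phiN phi_norm) yb.
  apply: le_trans (lerD (lexx _) (phiD phi_norm _ _)) _; rewrite !(phiN phi_norm).
  by have := u_st; case/andP=> _; lra.
have [e_small|e_big] := leP (phi e) d0.
  apply: le_trans (gapB u e p r^-1 u_st e_small _ _ u_ray u_stay) _.
  - by apply: le_trans p_le _; rewrite lerD2l (le_trans e_small).
  - by rewrite invr_gt0 r_gt0 lef_pV2 ?posrE ?ltW // (lt_trans ltr01).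
  - by rewrite ler_wpM2r ?(phi_ge0 phi_norm) // le_max lexx.
have max_r : 2 * t / d0 + 1 <= Num.max G (2 * t / d0 + 1) by rewrite le_max lexx orbT.
apply: le_trans p_le (le_trans _ (ler_wpM2r (phi_ge0 phi_norm e) max_r)).
rewrite (mulrDl (2 * t / d0)) mul1r lerD2r -mulrA ler_peMr ?mulr_ge0 ?(ltW (lt_le_trans s_gt0 s_le_t)) //.
by rewrite mulrC ler_pdivlMr // mul1r ltW.
Qed.

End NearestPointLipschitz.

Unset Implicit Arguments.

Theorem corollary3p10 (R : realType) (n : nat) (phi : 'rV[R]_n -> R)
  (s t l : R) :
  is_norm phi -> uniformly_convex phi -> C2_off0 phi ->
  0 < s -> s < t -> 1 < l ->
  exists Gamma : R,
    forall K : set 'rV[R]_n, closed K ->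
    forall a b y z : 'rV[R]_n,
      Klst phi K l s t a ->
      delta phi K b <= t ->
      xi phi K b y ->
      xi phi K a z ->
      phi (z - y) <= Gamma * phi (a - b).
Proof.
move=> phi_norm [gamma [gamma_gt0 phi_uconvex]] phi_C2 s_gt0 s_lt_t l_gt1.
have [Gamma lip] :=
  xget_xi_lipschitz phi_norm phi_C2 gamma_gt0 phi_uconvex s_gt0 (ltW s_lt_t) l_gt1.
(* closedness of K only serves to provide nearest points, and z is given *)
exists Gamma => K _ a b y z Ka b_t yb za.
have xi_a : xi phi K a !=set0 by exists z.
(* taking b = a shows that z is the nearest point chosen in rho *)
have z_xget : z = xget 0 (xi phi K a).
  have := lip K a a z Ka xi_a Ka.2.2 za; rewrite subrr (phi0 phi_norm) mulr0 => za0.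
  by apply/subr0_eq/(phi_eq0 phi_norm)/le_anti; rewrite za0 phi_ge0.
by rewrite z_xget (phi_distC phi_norm) lip.
Qed.
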